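(* For the generalized $q$-Toda hierarchy on $\mathcal L=\Lambda_\epsilon+u+e^v\Lambda_\epsilon^{-1}$ with flows $\epsilon\partial_{t_j}\mathcal L=[(B_j)_+,\mathcal L]$, the Hamiltonian densities $h_m=\frac1{m!}\operatorname{Res}\mathcal L^m$ satisfy $$\frac{\partial h_m}{\partial t_n}=\frac{\partial h_n}{\partial t_m},\qquad m,n\ge1.$$
   Context: Fix $\epsilon>0$; $\Lambda_\epsilon^j g(x)=g\!\left(\frac{x}{1-j\epsilon x}\right)$, $j\in\mathbb{Z}$. Difference operators $A=\sum_k A_k(x)\Lambda_\epsilon^k$ multiply by $(X\Lambda_\epsilon^i)\circ(Y\Lambda_\epsilon^j)=X(x)Y\!\left(\frac{x}{1-i\epsilon x}\right)\Lambda_\epsilon^{i+j}$; $A_+=\sum_{k\ge0}A_k\Lambda_\epsilon^k$, $A_-=\sum_{k<0}A_k\Lambda_\epsilon^k$, $\operatorname{Res}A=A_0$. $B_j=\mathcal L^j/j!$; $u,v$ depend on $x$ and the times $t_j$. *)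

From Stdlib Require Import Reals ZArith List.
Import ListNotations.
Open Scope R_scope.

(* A difference operator is a finite formal sum  sum_i X_i(x) Lambda_eps^{k_i},
   represented as a list of monomials (k_i, X_i). *)
Definition dop := list (Z * (R -> R)).

(* Lambda_eps^j acts by x |-> x / (1 - j eps x). *)
Definition shift (eps : R) (j : Z) (x : R) : R := x / (1 - IZR j * eps * x).

Definition coef (A : dop) (k : Z) (x : R) : R :=
  fold_right (fun m acc => if Z.eqb (fst m) k then snd m x + acc else acc) 0 A.

Definition dadd (A B : dop) : dop := A ++ B.
Definition dscale (c : R) (A : dop) : dop :=
  map (fun m => (fst m, fun x => c * snd m x)) A.

(* (X Lambda^i) o (Y Lambda^j) = X(x) Y(x/(1-i eps x)) Lambda^{i+j}, extended bilinearly *)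
Definition dmul (eps : R) (A B : dop) : dop :=
  flat_map (fun a => map (fun b =>
     ((fst a + fst b)%Z, fun x => snd a x * snd b (shift eps (fst a) x))) B) A.

Definition dcomm (eps : R) (A B : dop) : dop :=
  dadd (dmul eps A B) (dscale (-1) (dmul eps B A)).

Definition dplus (A : dop) : dop := filter (fun m => Z.leb 0 (fst m)) A.

Definition done : dop := [(0%Z, fun _ => 1)].

Fixpoint dpow (eps : R) (A : dop) (n : nat) : dop :=
  match n with
  | O => done
  | S n' => dmul eps (dpow eps A n') A
  end.

(* Times: t : nat -> R, with t j the time t_j (j >= 1). *)
Definition upd (t : nat -> R) (j : nat) (s : R) : nat -> R :=
  fun i => if Nat.eqb i j then s else t i.

Definition Lax (u v : R -> (nat -> R) -> R) (t : nat -> R) : dop :=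
  [(1%Z, fun _ => 1); (0%Z, fun x => u x t); ((-1)%Z, fun x => exp (v x t))].

Definition Bop (eps : R) (u v : R -> (nat -> R) -> R) (j : nat) (t : nat -> R) : dop :=
  dscale (/ INR (fact j)) (dpow eps (Lax u v t) j).

Definition hdens (eps : R) (u v : R -> (nat -> R) -> R) (m : nat) (x : R) (t : nat -> R) : R :=
  / INR (fact m) * coef (dpow eps (Lax u v t) m) 0 x.

(* Restricting [x] to an orbit [x_n] of the shifts turns difference operators into
   operators on functions on [Z], [L] into the Jacobi operator
   [g |-> g(n+1) + u(x_n) g(n) + e^{v(x_n)} g(n-1)], and [h_m(x_0)] into
   [(L^m)_{00} / m!].  Telescoping the Lax equation gives
   [eps ∂_{t_n} L^m = [(B_n)_+, L^m]], hence
   [eps ∂_{t_n} h_m = Res [(L^n)_+, L^m] / (m! n!)], which is symmetric in [m, n]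
   because [L^m] and [L^n] commute.
   If [1/(eps x)] is an integer, the orbit of [x] hits the common fixed point [0] of
   all shifts, where [x / 0 = 0] breaks the orbit relation.  There the flow
   hypothesis itself (the positive part of [L] is constant, so [[(B_j)_+, L]] has no
   positive-degree coefficients) pins down one row of every [L^j], which forces [u]
   and [e^v] to be constant along the orbit; so [h_m(x) = h_m(0)]. *)

From Pilot Require Import Defs.
From Stdlib Require Import Reals ZArith List Lra Lia FunctionalExtensionality
  IndefiniteDescription Classical.
Import ListNotations.
Open Scope R_scope.

Definition delta (i : Z) : Z -> R := fun m => if Z.eqb m i then 1 else 0.

Definition linear_op (T : (Z -> R) -> Z -> R) : Prop :=
  forall c1 c2 g h, T (fun m => c1 * g m + c2 * h m) = fun n => c1 * T g n + c2 * T h n.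

Section LinearOp.
Variable T : (Z -> R) -> Z -> R.
Hypothesis linT : linear_op T.

Lemma linear_add g h n : T (fun m => g m + h m) n = T g n + T h n.
Proof.
  replace (fun m => g m + h m) with (fun m => 1 * g m + 1 * h m)
    by (apply functional_extensionality; intro; ring).
  rewrite linT; ring.
Qed.

Lemma linear_scal c g n : T (fun m => c * g m) n = c * T g n.
Proof.
  replace (fun m => c * g m) with (fun m => c * g m + 0 * g m)
    by (apply functional_extensionality; intro; ring).
  rewrite linT; ring.
Qed.

Lemma linear_zero n : T (fun _ => 0) n = 0.
Proof.
  replace (fun _ : Z => 0) with (fun m : Z => 0 * delta 0 m)
    by (apply functional_extensionality; intro; ring).
  rewrite linear_scal; ring.
Qed.

Lemma linear_iter i : linear_op (Nat.iter i T).
Proof.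
  induction i as [|i IHi]; intros c1 c2 g h; [reflexivity|].
  rewrite !Nat.iter_succ, IHi. apply linT.
Qed.
End LinearOp.

Definition trunc_ge (k : Z) (g : Z -> R) : Z -> R := fun m => if Z.leb k m then g m else 0.
Definition trunc_lt (k : Z) (g : Z -> R) : Z -> R := fun m => if Z.ltb m k then g m else 0.

(* In the lattice picture, [A_+] ([A_-]) is [A] applied to [g] cut off below
   (at and above) the current site. *)
Definition op_plus (T : (Z -> R) -> Z -> R) (g : Z -> R) (k : Z) : R := T (trunc_ge k g) k.
Definition op_minus (T : (Z -> R) -> Z -> R) (g : Z -> R) (k : Z) : R := T (trunc_lt k g) k.

Lemma trunc_ge_id k g : (forall m, (m < k)%Z -> g m = 0) -> trunc_ge k g = g.
Proof.
  intros Hg. apply functional_extensionality; intro m. unfold trunc_ge.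
  destruct (Z.leb_spec k m); [reflexivity|]. symmetry; apply Hg; lia.
Qed.

Lemma trunc_ge_delta k i : (k <= i)%Z -> trunc_ge k (delta i) = delta i.
Proof.
  intros H. apply trunc_ge_id. intros m Hm. unfold delta. destruct (Z.eqb_spec m i); lia || ring.
Qed.

Lemma trunc_ge_delta_out k i : (i < k)%Z -> trunc_ge k (delta i) = fun _ => 0.
Proof.
  intros Hik. apply functional_extensionality; intro m. unfold trunc_ge, delta.
  destruct (Z.leb_spec k m), (Z.eqb_spec m i); lia || reflexivity.
Qed.

Section PlusMinusParts.
Variables T S : (Z -> R) -> Z -> R.
Hypotheses (linT : linear_op T) (linS : linear_op S).

Lemma op_plus_minus g k : T g k = op_plus T g k + op_minus T g k.
Proof.
  unfold op_plus, op_minus. rewrite <- linear_add by exact linT. f_equal.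
  apply functional_extensionality; intro m. unfold trunc_ge, trunc_lt.
  destruct (Z.leb_spec k m), (Z.ltb_spec m k); try lia; ring.
Qed.

Lemma op_plus_add g h k : op_plus T (fun m => g m + h m) k = op_plus T g k + op_plus T h k.
Proof.
  unfold op_plus. rewrite <- linear_add by exact linT. f_equal.
  apply functional_extensionality; intro m. unfold trunc_ge. destruct (Z.leb k m); ring.
Qed.

Lemma op_minus_add g h k : op_minus T (fun m => g m + h m) k = op_minus T g k + op_minus T h k.
Proof.
  unfold op_minus. rewrite <- linear_add by exact linT. f_equal.
  apply functional_extensionality; intro m. unfold trunc_lt. destruct (Z.ltb m k); ring.
Qed.

Lemma res_op_plus_op_plus : op_plus T (op_plus S (delta 0)) 0 = S (delta 0) 0 * T (delta 0) 0.
Proof.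
  unfold op_plus at 1. rewrite <- linear_scal by exact linT. f_equal.
  apply functional_extensionality; intro m. unfold trunc_ge at 1, op_plus.
  destruct (Z.leb_spec 0 m).
  - destruct (Z.eq_dec m 0) as [->|Hm].
    + rewrite trunc_ge_delta by lia.
      replace (delta 0 0) with 1 by reflexivity. ring.
    + rewrite trunc_ge_delta_out, linear_zero by (assumption || lia).
      unfold delta; destruct (Z.eqb_spec m 0); lia || ring.
  - unfold delta at 2; destruct (Z.eqb_spec m 0); lia || ring.
Qed.

Lemma res_op_minus_op_minus : op_minus T (op_minus S (delta 0)) 0 = 0.
Proof.
  unfold op_minus at 1.
  replace (trunc_lt 0 (op_minus S (delta 0))) with (fun _ : Z => 0); [apply linear_zero, linT|].
  apply functional_extensionality; intro m. unfold trunc_lt, op_minus.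
  destruct (Z.ltb_spec m 0); [|reflexivity].
  replace (trunc_lt m (delta 0)) with (fun _ : Z => 0); [symmetry; apply linear_zero, linS|].
  apply functional_extensionality; intro q. unfold trunc_lt, delta.
  destruct (Z.ltb_spec q m), (Z.eqb_spec q 0); lia || reflexivity.
Qed.
End PlusMinusParts.

(* [Res [A_+, B] = Res [B_+, A]] for commuting A, B: the difference is
   [Res [A_+, B_+] - Res [A_-, B_-]], and both residues vanish by triangularity. *)
Lemma res_comm_op_plus_sym (A B : (Z -> R) -> Z -> R) :
  linear_op A -> linear_op B -> (forall g, A (B g) = B (A g)) ->
  op_plus A (B (delta 0)) 0%Z - B (op_plus A (delta 0)) 0%Z =
  op_plus B (A (delta 0)) 0%Z - A (op_plus B (delta 0)) 0%Z.
Proof.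
  intros linA linB AB.
  set (d := delta 0).
  assert (splitA : forall k, A d k = op_plus A d k + op_minus A d k)
    by (intro; apply op_plus_minus, linA).
  assert (splitB : forall k, B d k = op_plus B d k + op_minus B d k)
    by (intro; apply op_plus_minus, linB).
  assert (EAB : op_plus A (B d) 0 = op_plus A (op_plus B d) 0 + op_plus A (op_minus B d) 0).
  { rewrite <- op_plus_add by exact linA. f_equal. apply functional_extensionality, splitB. }
  assert (EBA : op_plus B (A d) 0 = op_plus B (op_plus A d) 0 + op_plus B (op_minus A d) 0).
  { rewrite <- op_plus_add by exact linB. f_equal. apply functional_extensionality, splitA. }
  assert (comm : A (B d) 0%Z = B (A d) 0%Z) by (rewrite AB; reflexivity).
  rewrite (op_plus_minus A linA (B d)), (op_plus_minus B linB (A d)), EAB, EBA in comm.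
  replace (op_minus A (B d) 0) with (op_minus A (op_plus B d) 0 + op_minus A (op_minus B d) 0)
    in comm by (rewrite <- op_minus_add by exact linA; f_equal;
                apply functional_extensionality; intro; symmetry; apply splitB).
  replace (op_minus B (A d) 0) with (op_minus B (op_plus A d) 0 + op_minus B (op_minus A d) 0)
    in comm by (rewrite <- op_minus_add by exact linB; f_equal;
                apply functional_extensionality; intro; symmetry; apply splitA).
  rewrite (op_plus_minus B linB (op_plus A d)), (op_plus_minus A linA (op_plus B d)), EAB, EBA.
  unfold d in *.
  rewrite (res_op_minus_op_minus A B), (res_op_minus_op_minus B A) in comm by assumption.
  rewrite (res_op_plus_op_plus A B), (res_op_plus_op_plus B A) in * by assumption.
  lra.
Qed.

(* A difference operator acts on functions on the lattice [Z]: site [n] stands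
   for the point [X n] of an orbit [X] of the shifts, [Λ^k] moving [X n] to [X (n + k)]. *)
Definition dact (X : Z -> R) (A : dop) (g : Z -> R) (n : Z) : R :=
  fold_right (fun m acc => snd m (X n) * g (n + fst m)%Z + acc) 0 A.

Definition orbit_at (eps : R) (X : Z -> R) (n : Z) : Prop :=
  forall k, Defs.shift eps k (X n) = X (n + k)%Z.

Lemma coef_dact X A k n : coef A k (X n) = dact X A (delta (n + k)) n.
Proof.
  induction A as [|[k' f] A IH]; simpl; [reflexivity|].
  rewrite IH. unfold delta. destruct (Z.eqb_spec k' k), (Z.eqb_spec (n + k') (n + k));
    subst; lia || ring.
Qed.

Lemma dact_app X A B g n : dact X (A ++ B) g n = dact X A g n + dact X B g n.
Proof. induction A as [|a A IH]; simpl; [ring|]. rewrite IH; ring. Qed.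

Lemma dact_dscale X c A g n : dact X (dscale c A) g n = c * dact X A g n.
Proof. induction A as [|a A IH]; simpl; [ring|]. rewrite IH; ring. Qed.

Lemma dact_ext_site X Y A g n : X n = Y n -> dact X A g n = dact Y A g n.
Proof. intros H. induction A as [|a A IH]; simpl; [reflexivity|]. rewrite IH, H; reflexivity. Qed.

Lemma dact_dmul eps X A B g n :
  orbit_at eps X n -> dact X (dmul eps A B) g n = dact X A (dact X B g) n.
Proof.
  intros HX. induction A as [|a A IH]; [reflexivity|].
  unfold dmul in *; cbn [flat_map]. rewrite dact_app, IH. simpl. f_equal.
  clear IH. induction B as [|b B IHB]; simpl.
  - ring.
  - rewrite IHB, HX, Z.add_assoc; ring.
Qed.

Lemma dact_dplus X A g n : dact X (dplus A) g n = op_plus (dact X A) g n.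
Proof.
  unfold op_plus. induction A as [|[k f] A IH]; simpl; [reflexivity|].
  destruct (Z.leb_spec 0 k); simpl; rewrite IH; unfold trunc_ge;
    destruct (Z.leb_spec n (n + k)); lia || ring.
Qed.

Lemma dact_dcomm eps X A B g n : orbit_at eps X n ->
  dact X (dcomm eps A B) g n = dact X A (dact X B g) n - dact X B (dact X A g) n.
Proof.
  intros HX. unfold dcomm, dadd. rewrite dact_app, dact_dscale, !dact_dmul by exact HX. ring.
Qed.

Definition jacobi (a b : Z -> R) (g : Z -> R) (n : Z) : R :=
  g (n + 1)%Z + a n * g n + b n * g (n - 1)%Z.

Lemma jacobi_linear a b : linear_op (jacobi a b).
Proof.
  intros c1 c2 g h. apply functional_extensionality; intro n. unfold jacobi. ring.
Qed.

Definition lax_jacobi (X : Z -> R) (u v : R -> (nat -> R) -> R) (t : nat -> R) :=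
  jacobi (fun n => u (X n) t) (fun n => exp (v (X n) t)).

Lemma dact_Lax X u v t : dact X (Lax u v t) = lax_jacobi X u v t.
Proof.
  apply functional_extensionality; intro g; apply functional_extensionality; intro n.
  unfold dact, Lax, lax_jacobi, jacobi; simpl.
  rewrite Z.add_0_r. replace (n + -1)%Z with (n - 1)%Z by lia. ring.
Qed.

Lemma dact_dpow eps X u v t i g n : orbit_at eps X n ->
  dact X (dpow eps (Lax u v t) i) g n = Nat.iter i (lax_jacobi X u v t) g n.
Proof.
  intros HX. revert g; induction i as [|i IHi]; intro g.
  - unfold dact, done; simpl. rewrite Z.add_0_r; ring.
  - cbn [dpow]. rewrite dact_dmul, IHi, dact_Lax, Nat.iter_succ_r by exact HX. reflexivity.
Qed.

Lemma dact_Bop_plus eps u v X j t g n : orbit_at eps X n ->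
  dact X (dplus (Bop eps u v j t)) g n
  = / INR (fact j) * op_plus (Nat.iter j (lax_jacobi X u v t)) g n.
Proof.
  intros HX. unfold Bop. rewrite dact_dplus. unfold op_plus.
  rewrite dact_dscale, dact_dpow by exact HX. reflexivity.
Qed.

Lemma hdens_iter eps u v X m s : orbit_at eps X 0 ->
  hdens eps u v m (X 0%Z) s = / INR (fact m) * Nat.iter m (lax_jacobi X u v s) (delta 0) 0%Z.
Proof. intros HX. unfold hdens. rewrite coef_dact, dact_dpow by exact HX. reflexivity. Qed.

Lemma derivable_pt_lim_val f x a b : derivable_pt_lim f x a -> a = b -> derivable_pt_lim f x b.
Proof. intros H <-; exact H. Qed.

Definition zsum (F : Z -> R) (ks : list Z) : R := fold_right (fun k acc => F k + acc) 0 ks.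

Lemma zsum_plus F G ks : zsum (fun k => F k + G k) ks = zsum F ks + zsum G ks.
Proof. induction ks as [|k ks IH]; simpl; [ring|]. rewrite IH; ring. Qed.

Lemma zsum_scal c F ks : c * zsum F ks = zsum (fun k => c * F k) ks.
Proof. induction ks as [|k ks IH]; simpl; [ring|]. rewrite <- IH; ring. Qed.

Lemma zsum_indicator_notin k0 c (g : Z -> R) ks : ~ In k0 ks ->
  zsum (fun k => (if Z.eqb k0 k then c else 0) * g k) ks = 0.
Proof.
  induction ks as [|k ks IH]; intros Hk; simpl; [reflexivity|].
  destruct (Z.eqb_spec k0 k); [exfalso; apply Hk; left; congruence|].
  rewrite IH by (intro; apply Hk; right; assumption). ring.
Qed.

Lemma zsum_indicator k0 c (g : Z -> R) ks : NoDup ks -> In k0 ks ->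
  zsum (fun k => (if Z.eqb k0 k then c else 0) * g k) ks = c * g k0.
Proof.
  induction ks as [|k ks IH]; intros Hnd Hk; simpl; [contradiction|].
  inversion Hnd as [|? ? Hk' Hnd']; subst.
  destruct (Z.eqb_spec k0 k) as [->|Hne].
  - rewrite zsum_indicator_notin by exact Hk'. ring.
  - rewrite IH by (auto; destruct Hk; congruence). ring.
Qed.

Lemma dact_coef_sum X A g n ks : NoDup ks -> incl (map fst A) ks ->
  dact X A g n = zsum (fun k => coef A k (X n) * g (n + k)%Z) ks.
Proof.
  intros Hnd. induction A as [|[k0 f] A IH]; intros Hincl; simpl.
  - induction ks as [|k ks IHks]; simpl; [reflexivity|].
    inversion Hnd; subst. rewrite <- IHks by (auto; intros ? []). ring.
  - rewrite IH by (intros k Hk; apply Hincl; right; exact Hk).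
    rewrite <- (zsum_indicator k0 (f (X n)) (fun k => g (n + k)%Z) ks Hnd)
      by (apply Hincl; left; reflexivity).
    rewrite <- zsum_plus. f_equal. apply functional_extensionality; intro k.
    destruct (Z.eqb_spec k0 k); ring.
Qed.

Lemma derivable_pt_lim_zsum (F : R -> Z -> R) (dF : Z -> R) x ks :
  (forall k, derivable_pt_lim (fun s => F s k) x (dF k)) ->
  derivable_pt_lim (fun s => zsum (F s) ks) x (zsum dF ks).
Proof.
  intros HF. induction ks as [|k ks IH]; simpl.
  - apply derivable_pt_lim_const.
  - apply derivable_pt_lim_plus; auto.
Qed.

Lemma upd_same (t : nat -> R) j : upd t j (t j) = t.
Proof.
  apply functional_extensionality; intro i. unfold upd. destruct (Nat.eqb_spec i j); subst; auto.
Qed.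

Definition lax_flow (eps : R) (u v : R -> (nat -> R) -> R) : Prop :=
  forall (j : nat), (1 <= j)%nat -> forall (k : Z) (x : R) (t : nat -> R),
    exists d : R,
      derivable_pt_lim (fun s => coef (Lax u v (upd t j s)) k x) (t j) d /\
      eps * d = coef (dcomm eps (dplus (Bop eps u v j t)) (Lax u v t)) k x.

Section FlowDerivative.
Variables (eps : R) (u v : R -> (nat -> R) -> R) (X : Z -> R) (j : nat) (t : nat -> R).
Hypotheses (heps : eps <> 0) (HX : forall n, orbit_at eps X n).
Let C := dcomm eps (dplus (Bop eps u v j t)) (Lax u v t).
Hypothesis flow_jt : forall k x, exists d,
  derivable_pt_lim (fun s => coef (Lax u v (upd t j s)) k x) (t j) d /\ eps * d = coef C k x.

Local Notation P := (dact X (dplus (Bop eps u v j t))).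
Local Notation L s := (lax_jacobi X u v s).

Lemma lax_jacobi_flow (F : R -> Z -> R) (DF : Z -> R) n :
  (forall m, derivable_pt_lim (fun s => F s m) (t j) (DF m)) ->
  derivable_pt_lim (fun s => L (upd t j s) (F s) n) (t j)
    (/ eps * (P (L t (F (t j))) n - L t (P (F (t j))) n) + L t DF n).
Proof.
  intros HF.
  destruct (functional_choice (fun (kx : Z * R) d =>
      derivable_pt_lim (fun s => coef (Lax u v (upd t j s)) (fst kx) (snd kx)) (t j) d /\
      eps * d = coef C (fst kx) (snd kx))) as [dk Hdk].
  { intros [k x]; apply flow_jt. }
  set (ks := nodup Z.eq_dec ([1; 0; -1] ++ map fst C)%Z).
  assert (Hnd : NoDup ks) by apply NoDup_nodup.
  assert (HLks : forall w, incl (map fst (Lax u v w)) ks)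
    by (intros w k Hk; apply nodup_In, in_or_app; left; exact Hk).
  assert (HCks : incl (map fst C) ks) by (intros k Hk; apply nodup_In, in_or_app; right; exact Hk).
  apply derivable_pt_lim_ext with
    (f := fun s => zsum (fun k => coef (Lax u v (upd t j s)) k (X n) * F s (n + k)%Z) ks).
  { intro s. rewrite <- dact_Lax. symmetry. apply dact_coef_sum; auto. }
  replace (/ eps * (P (L t (F (t j))) n - L t (P (F (t j))) n) + L t DF n) with
    (zsum (fun k => dk (k, X n) * F (t j) (n + k)%Z
                    + coef (Lax u v (upd t j (t j))) k (X n) * DF (n + k)%Z) ks).
  - apply derivable_pt_lim_zsum. intro k.
    apply (derivable_pt_lim_mult (fun s => coef (Lax u v (upd t j s)) k (X n))
             (fun s => F s (n + k)%Z)); [apply (Hdk (k, X n)) | apply HF].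
  - rewrite zsum_plus, upd_same, <- !dact_Lax, <- (dact_dcomm eps) by apply HX. fold C. f_equal.
    + rewrite (dact_coef_sum X C _ _ ks) by assumption. rewrite zsum_scal. f_equal.
      apply functional_extensionality; intro k. pose proof (proj2 (Hdk (k, X n))) as Hk.
      simpl in Hk. rewrite <- Hk.
      field. exact heps.
    + symmetry. apply dact_coef_sum; auto.
Qed.

(* Telescoping: [[P, L^(i+1)] = [P, L] L^i + L [P, L^i]]. *)
Lemma lax_jacobi_iter_flow i g n :
  derivable_pt_lim (fun s => Nat.iter i (L (upd t j s)) g n) (t j)
    (/ eps * (P (Nat.iter i (L t) g) n - Nat.iter i (L t) (P g) n)).
Proof.
  revert n; induction i as [|i IHi]; intro n; simpl Nat.iter.
  - replace (/ eps * (P g n - P g n)) with 0 by ring. apply derivable_pt_lim_const.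
  - pose proof (lax_jacobi_flow (fun s => Nat.iter i (L (upd t j s)) g) _ n IHi) as H.
    cbv beta in H. rewrite upd_same in H.
    replace (fun m => / eps * (P (Nat.iter i (L t) g) m - Nat.iter i (L t) (P g) m)) with
      (fun m => / eps * P (Nat.iter i (L t) g) m + - / eps * Nat.iter i (L t) (P g) m) in H
      by (apply functional_extensionality; intro; ring).
    unfold lax_jacobi in *. rewrite jacobi_linear in H.
    apply (derivable_pt_lim_val _ _ _ _ H). ring.
Qed.
End FlowDerivative.

Lemma hdens_flow_orbit eps u v X (heps : eps <> 0) (flow : lax_flow eps u v)
  (HX : forall n, orbit_at eps X n) m j (hj : (1 <= j)%nat) t :
  let Lp k := Nat.iter k (lax_jacobi X u v t) in
  derivable_pt_lim (fun s => hdens eps u v m (X 0%Z) (upd t j s)) (t j)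
    (/ eps * / INR (fact m) * / INR (fact j) *
     (op_plus (Lp j) (Lp m (delta 0)) 0%Z - Lp m (op_plus (Lp j) (delta 0)) 0%Z)).
Proof.
  intros Lp.
  apply derivable_pt_lim_ext with
    (f := fun s => / INR (fact m) * Nat.iter m (lax_jacobi X u v (upd t j s)) (delta 0) 0%Z).
  { intro s. symmetry. apply hdens_iter, HX. }
  apply (derivable_pt_lim_val _ _ _ _ (derivable_pt_lim_scal _ _ _ _
    (lax_jacobi_iter_flow eps u v X j t heps HX (fun k x => flow j hj k x t) m (delta 0) 0%Z))).
  replace (dact X (dplus (Bop eps u v j t)) (delta 0))
    with (fun n => / INR (fact j) * op_plus (Lp j) (delta 0) n)
    by (apply functional_extensionality; intro n; symmetry; apply dact_Bop_plus, HX).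
  rewrite dact_Bop_plus by apply HX.
  rewrite linear_scal by apply linear_iter, jacobi_linear.
  unfold Lp. field. repeat split; apply INR_fact_neq_0 || exact heps.
Qed.

Lemma hdens_flow_sym_orbit eps u v X (heps : eps <> 0) (flow : lax_flow eps u v)
  (HX : forall n, orbit_at eps X n) m n (hm : (1 <= m)%nat) (hn : (1 <= n)%nat) t :
  exists d : R,
    derivable_pt_lim (fun s => hdens eps u v m (X 0%Z) (upd t n s)) (t n) d /\
    derivable_pt_lim (fun s => hdens eps u v n (X 0%Z) (upd t m s)) (t m) d.
Proof.
  eexists; split; [exact (hdens_flow_orbit eps u v X heps flow HX m n hn t)|].
  apply (derivable_pt_lim_val _ _ _ _ (hdens_flow_orbit eps u v X heps flow HX n m hm t)).
  cbv zeta.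
  rewrite (res_comm_op_plus_sym (Nat.iter m (lax_jacobi X u v t))
                                (Nat.iter n (lax_jacobi X u v t)));
    try apply linear_iter, jacobi_linear.
  - ring.
  - intro g. rewrite <- !Nat.iter_add, Nat.add_comm. reflexivity.
Qed.

Fixpoint subdiag_prod (b : Z -> R) (n : Z) (j : nat) : R :=
  match j with
  | O => 1
  | S j => b (n - Z.of_nat j)%Z * subdiag_prod b n j
  end.

Lemma subdiag_prod_const b b0 n j : (forall k, (k < j)%nat -> b (n - Z.of_nat k)%Z = b0) ->
  subdiag_prod b n j = b0 ^ j.
Proof.
  induction j as [|j IH]; intros Hb; simpl; [reflexivity|].
  rewrite Hb, IH by first [lia | intros; apply Hb; lia]. ring.
Qed.

Section JacobiEntries.
Variables a b : Z -> R.
Local Notation J := (jacobi a b).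

Lemma jacobi_delta i :
  J (delta i) = fun m => delta (i - 1) m + a i * delta i m + b (i + 1)%Z * delta (i + 1) m.
Proof.
  apply functional_extensionality; intro m. unfold jacobi, delta.
  destruct (Z.eqb_spec (m + 1) i), (Z.eqb_spec m (i - 1)), (Z.eqb_spec m i),
    (Z.eqb_spec (m - 1) i), (Z.eqb_spec m (i + 1)); try lia;
    first [replace m with i by lia | replace m with (i + 1)%Z by lia | idtac]; ring.
Qed.

Lemma jacobi_iter_delta j i n :
  Nat.iter (S j) J (delta i) n
  = Nat.iter j J (delta (i - 1)) n + a i * Nat.iter j J (delta i) n
    + b (i + 1)%Z * Nat.iter j J (delta (i + 1)) n.
Proof.
  rewrite Nat.iter_succ_r, jacobi_delta.
  rewrite !(linear_add _ (linear_iter _ (jacobi_linear a b) j)),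
    !(linear_scal _ (linear_iter _ (jacobi_linear a b) j)).
  reflexivity.
Qed.

Lemma jacobi_iter_above j : forall i n, (n + Z.of_nat j <= i)%Z ->
  Nat.iter j J (delta i) n = if Z.eqb i (n + Z.of_nat j) then 1 else 0.
Proof.
  induction j as [|j IH]; intros i n H.
  - simpl. unfold delta. destruct (Z.eqb_spec n i), (Z.eqb_spec i (n + 0)); lia || reflexivity.
  - rewrite jacobi_iter_delta, !IH by lia.
    destruct (Z.eqb_spec (i - 1) (n + Z.of_nat j)), (Z.eqb_spec i (n + Z.of_nat j)),
      (Z.eqb_spec (i + 1) (n + Z.of_nat j)), (Z.eqb_spec i (n + Z.of_nat (S j))); lia || ring.
Qed.

Lemma jacobi_iter_below j : forall i n, (i <= n - Z.of_nat j)%Z ->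
  Nat.iter j J (delta i) n = if Z.eqb i (n - Z.of_nat j) then subdiag_prod b n j else 0.
Proof.
  induction j as [|j IH]; intros i n H.
  - simpl. unfold delta. destruct (Z.eqb_spec n i), (Z.eqb_spec i (n - 0)); lia || reflexivity.
  - rewrite jacobi_iter_delta, !IH by lia. cbn [subdiag_prod].
    destruct (Z.eqb_spec (i - 1) (n - Z.of_nat j)), (Z.eqb_spec i (n - Z.of_nat j)),
      (Z.eqb_spec (i + 1) (n - Z.of_nat j)), (Z.eqb_spec i (n - Z.of_nat (S j))); try lia; try ring.
    replace (i + 1)%Z with (n - Z.of_nat j)%Z by lia. ring.
Qed.
End JacobiEntries.

(* Row [p] of the powers of a Jacobi operator, read on the columns [i >= p],
   determines all its coefficients: moving away from [p] one site at a time,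
   each new coefficient appears linearly in one entry, with a nonzero factor. *)
Section JacobiRowRigidity.
Variables (a b : Z -> R) (a0 b0 : R) (p : Z).
Hypotheses (hb0 : b0 <> 0) (ha_p : a p = a0) (hb_p : b p = b0).
Local Notation J := (jacobi a b).
Local Notation J0 := (jacobi (fun _ => a0) (fun _ => b0)).
Hypothesis row_p :
  forall j i, (p <= i)%Z -> Nat.iter j J (delta i) p = Nat.iter j J0 (delta i) p.

Lemma row_rigid_a_above i : (p < i)%Z -> a i = a0.
Proof.
  intros Hi. set (j := Z.to_nat (i - p)).
  pose proof (jacobi_iter_delta a b j i p) as E.
  pose proof (jacobi_iter_delta (fun _ => a0) (fun _ => b0) j i p) as E0.
  rewrite !row_p in E by lia.
  rewrite (jacobi_iter_above _ _ j i), (jacobi_iter_above _ _ j (i + 1)) in E, E0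
    by (unfold j; lia).
  destruct (Z.eqb_spec i (p + Z.of_nat j)), (Z.eqb_spec (i + 1) (p + Z.of_nat j));
    unfold j in *; try lia.
  lra.
Qed.

Lemma row_rigid_b_above i : (p <= i)%Z -> b (i + 1)%Z = b0.
Proof.
  intros Hi. destruct (Z.eq_dec i p) as [->|Hne].
  - pose proof (jacobi_iter_delta a b 1 p p) as E.
    pose proof (jacobi_iter_delta (fun _ => a0) (fun _ => b0) 1 p p) as E0.
    rewrite (row_p 2 p), (row_p 1 p), (row_p 1 (p + 1)) in E by lia.
    rewrite (jacobi_iter_below a b 1 (p - 1)) in E by lia.
    rewrite (jacobi_iter_below (fun _ => a0) (fun _ => b0) 1 (p - 1)) in E0 by lia.
    rewrite (jacobi_iter_above _ _ 1 (p + 1)) in E, E0 by lia.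
    destruct (Z.eqb_spec (p - 1) (p - Z.of_nat 1)), (Z.eqb_spec (p + 1) (p + Z.of_nat 1));
      try lia.
    cbn [subdiag_prod Z.of_nat] in E, E0. rewrite Z.sub_0_r, hb_p, ha_p in E. lra.
  - set (j := Z.to_nat (i + 1 - p)).
    pose proof (jacobi_iter_delta a b j i p) as E.
    pose proof (jacobi_iter_delta (fun _ => a0) (fun _ => b0) j i p) as E0.
    rewrite !row_p, row_rigid_a_above in E by lia.
    rewrite (jacobi_iter_above _ _ j (i + 1)) in E, E0 by (unfold j; lia).
    destruct (Z.eqb_spec (i + 1) (p + Z.of_nat j)); [lra | unfold j in *; lia].
Qed.

Lemma row_rigid_above m : (p <= m)%Z -> a m = a0 /\ b m = b0.
Proof.
  intros Hm. destruct (Z.eq_dec m p) as [->|Hne]; [split; assumption|].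
  split; [apply row_rigid_a_above; lia|].
  replace m with (m - 1 + 1)%Z by lia. apply row_rigid_b_above. lia.
Qed.

Lemma row_column_down q :
  (forall j, Nat.iter j J (delta q) p = Nat.iter j J0 (delta q) p) ->
  (forall j, Nat.iter j J (delta (q + 1)) p = Nat.iter j J0 (delta (q + 1)) p) ->
  a q = a0 -> b (q + 1)%Z = b0 ->
  forall j, Nat.iter j J (delta (q - 1)) p = Nat.iter j J0 (delta (q - 1)) p.
Proof.
  intros Hq Hq1 Ha Hb j.
  pose proof (jacobi_iter_delta a b j q p) as E.
  pose proof (jacobi_iter_delta (fun _ => a0) (fun _ => b0) j q p) as E0.
  rewrite !Hq, Hq1, Ha, Hb in E. lra.
Qed.

Lemma row_subdiag_prod d : (forall m, (p - Z.of_nat d <= m)%Z -> b m = b0) ->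
  subdiag_prod b p (S d) = subdiag_prod (fun _ => b0) p (S d).
Proof.
  intros Hb. rewrite !(subdiag_prod_const _ b0) by (reflexivity || (intros; apply Hb; lia)).
  reflexivity.
Qed.

Lemma row_rigid_a_below d :
  (forall m, (p - Z.of_nat d <= m)%Z -> b m = b0) ->
  (forall j i, (p - Z.of_nat (S d) <= i)%Z ->
     Nat.iter j J (delta i) p = Nat.iter j J0 (delta i) p) ->
  a (p - Z.of_nat (S d))%Z = a0.
Proof.
  intros Hb Hcols. set (q := (p - Z.of_nat (S d))%Z).
  pose proof (jacobi_iter_delta a b (S d) q p) as E.
  pose proof (jacobi_iter_delta (fun _ => a0) (fun _ => b0) (S d) q p) as E0.
  rewrite (Hcols (S (S d)) q), (Hcols (S d) (q + 1)%Z), (Hb (q + 1)%Z) in E by (unfold q; lia).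
  rewrite (jacobi_iter_below a b (S d) (q - 1)), (jacobi_iter_below a b (S d) q)
    in E by (unfold q; lia).
  rewrite (jacobi_iter_below _ _ (S d) (q - 1)), (jacobi_iter_below _ _ (S d) q)
    in E0 by (unfold q; lia).
  destruct (Z.eqb_spec (q - 1) (p - Z.of_nat (S d))), (Z.eqb_spec q (p - Z.of_nat (S d)));
    unfold q in *; try lia.
  rewrite row_subdiag_prod in E by exact Hb.
  apply (Rmult_eq_reg_r (subdiag_prod (fun _ => b0) p (S d))); [lra|].
  rewrite (subdiag_prod_const _ b0) by reflexivity. apply pow_nonzero, hb0.
Qed.

Lemma row_rigid_b_below d :
  (forall m, (p - Z.of_nat d <= m)%Z -> b m = b0) ->
  (forall j, Nat.iter j J (delta (p - Z.of_nat (S (S d)))) p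
             = Nat.iter j J0 (delta (p - Z.of_nat (S (S d)))) p) ->
  b (p - Z.of_nat (S d))%Z = b0.
Proof.
  intros Hb Hcol.
  pose proof (jacobi_iter_below a b (S (S d)) (p - Z.of_nat (S (S d))) p ltac:(lia)) as E.
  pose proof (jacobi_iter_below (fun _ => a0) (fun _ => b0) (S (S d)) (p - Z.of_nat (S (S d))) p
    ltac:(lia)) as E0.
  rewrite <- Hcol, E, Z.eqb_refl in E0. clear E.
  change (subdiag_prod ?c p (S (S d))) with (c (p - Z.of_nat (S d))%Z * subdiag_prod c p (S d))
    in E0.
  rewrite row_subdiag_prod in E0 by exact Hb.
  apply (Rmult_eq_reg_r (subdiag_prod (fun _ => b0) p (S d))); [lra|].
  rewrite (subdiag_prod_const _ b0) by reflexivity. apply pow_nonzero, hb0.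
Qed.

Lemma row_rigid_below_step d :
  (forall j i, (p - Z.of_nat d <= i)%Z -> Nat.iter j J (delta i) p = Nat.iter j J0 (delta i) p) ->
  (forall m, (p - Z.of_nat d <= m)%Z -> a m = a0 /\ b m = b0) ->
  (forall j i, (p - Z.of_nat (S d) <= i)%Z ->
     Nat.iter j J (delta i) p = Nat.iter j J0 (delta i) p) /\
  (forall m, (p - Z.of_nat (S d) <= m)%Z -> a m = a0 /\ b m = b0).
Proof.
  intros Hcols Hsites.
  assert (Hb : forall m, (p - Z.of_nat d <= m)%Z -> b m = b0) by (intros; apply Hsites; lia).
  assert (Hcols1 : forall j i, (p - Z.of_nat (S d) <= i)%Z ->
                     Nat.iter j J (delta i) p = Nat.iter j J0 (delta i) p).
  { intros j i Hi. destruct (Z.eq_dec i (p - Z.of_nat (S d))) as [->|Hne]; [|apply Hcols; lia].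
    replace (p - Z.of_nat (S d))%Z with (p - Z.of_nat d - 1)%Z by lia.
    apply row_column_down; intros; apply Hcols || apply Hsites; lia. }
  assert (Ha1 := row_rigid_a_below d Hb Hcols1).
  assert (Hb1 : b (p - Z.of_nat (S d))%Z = b0).
  { apply (row_rigid_b_below d Hb). intro j.
    replace (p - Z.of_nat (S (S d)))%Z with (p - Z.of_nat (S d) - 1)%Z by lia.
    apply row_column_down; [intro; apply Hcols1; lia | intro; apply Hcols1; lia | exact Ha1 |].
    apply Hb; lia. }
  split; [exact Hcols1|].
  intros m Hm. destruct (Z.eq_dec m (p - Z.of_nat (S d))) as [->|Hne]; [split; assumption|].
  apply Hsites; lia.
Qed.

Lemma row_rigid m : a m = a0 /\ b m = b0.
Proof.
  assert (Hd : forall d,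
    (forall j i, (p - Z.of_nat d <= i)%Z -> Nat.iter j J (delta i) p = Nat.iter j J0 (delta i) p) /\
    (forall m, (p - Z.of_nat d <= m)%Z -> a m = a0 /\ b m = b0)).
  { induction d as [|d [Hcols Hsites]].
    - split; intros; [apply row_p | apply row_rigid_above]; lia.
    - apply row_rigid_below_step; assumption. }
  apply (proj2 (Hd (Z.to_nat (p - m)))). lia.
Qed.
End JacobiRowRigidity.

Lemma orbit_at_zero eps n : orbit_at eps (fun _ => 0) n.
Proof. intro k. unfold Defs.shift, Rdiv. ring. Qed.

(* [Λ^k] acts on [1/x] as the translation by [-k eps]. *)
Lemma orbit_at_inv_affine eps w n : eps <> 0 -> w - IZR n <> 0 ->
  orbit_at eps (fun m => / (eps * (w - IZR m))) n.
Proof.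
  intros heps Hn k. unfold Defs.shift. rewrite plus_IZR.
  destruct (Req_dec (w - IZR n - IZR k) 0) as [Hz|Hz].
  - replace (w - (IZR n + IZR k)) with 0 by lra. rewrite Rmult_0_r, Rinv_0.
    replace (1 - IZR k * eps * / (eps * (w - IZR n))) with 0.
    + unfold Rdiv. rewrite Rinv_0. ring.
    + replace (IZR k) with (w - IZR n) by lra. field. split; assumption.
  - replace (w - (IZR n + IZR k)) with (w - IZR n - IZR k) by ring.
    field. repeat split; assumption.
Qed.

(* The orbit of [x] is [n |-> 1 / (eps (w - n))] with [w = 1/(eps x)]. *)
Lemma shift_orbit_through eps x : eps <> 0 -> exists X : Z -> R, X 0%Z = x /\
  ((forall n, orbit_at eps X n) \/
   exists p, X p = 0 /\ forall n, n <> p -> orbit_at eps X n).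
Proof.
  intros heps. set (w := / (eps * x)).
  exists (fun m => / (eps * (w - IZR m))). split.
  { unfold w. simpl. rewrite Rminus_0_r, Rinv_mult, Rinv_inv.
    field. exact heps. }
  destruct (classic (exists p : Z, w = IZR p)) as [[p Hp]|Hw].
  - right. exists p. split.
    + rewrite Hp, Rminus_diag, Rmult_0_r. apply Rinv_0.
    + intros n Hn. apply orbit_at_inv_affine; [exact heps|].
      intro Hz. apply Hn, eq_IZR. lra.
  - left. intro n. apply orbit_at_inv_affine; [exact heps|].
    intro Hz. apply Hw. exists n. lra.
Qed.

Lemma coef_Lax_pos u v w k x : (1 <= k)%Z -> coef (Lax u v w) k x = if Z.eqb 1 k then 1 else 0.
Proof.
  intros Hk. unfold coef, Lax; cbn [fold_right fst snd].
  destruct (Z.eqb_spec 1 k), (Z.eqb_spec 0 k), (Z.eqb_spec (-1) k); lia || ring.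
Qed.

Lemma lax_flow_coef_pos eps u v (flow : lax_flow eps u v) j (hj : (1 <= j)%nat) k x t :
  (1 <= k)%Z -> coef (dcomm eps (dplus (Bop eps u v j t)) (Lax u v t)) k x = 0.
Proof.
  intros Hk. destruct (flow j hj k x t) as [d [Hd Hc]].
  assert (d = 0) as ->.
  { apply (uniqueness_limite (fun _ => if Z.eqb 1 k then 1 else 0) (t j));
      [|apply derivable_pt_lim_const].
    apply (derivable_pt_lim_ext (fun s => coef (Lax u v (upd t j s)) k x)); [|exact Hd].
    intro s. apply coef_Lax_pos, Hk. }
  rewrite <- Hc. ring.
Qed.

(* Read off at the site [p - 1], from which [Λ] lands on the fixed point [0]. *)
Lemma lax_row_singular eps u v (flow : lax_flow eps u v) X p (HXp : X p = 0)
  (HX : forall n, n <> p -> orbit_at eps X n) t j i : (p <= i)%Z ->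
  Nat.iter j (lax_jacobi X u v t) (delta i) p
  = Nat.iter j (lax_jacobi (fun _ => 0) u v t) (delta i) p.
Proof.
  intros Hi. destruct j as [|j']; [reflexivity|]. set (j := S j').
  set (n := (p - 1)%Z).
  assert (Hn : orbit_at eps X n) by (apply HX; unfold n; lia).
  assert (Hn1 : orbit_at eps X (n - 1)) by (apply HX; unfold n; lia).
  pose proof (lax_flow_coef_pos eps u v flow j ltac:(unfold j; lia) (i - n) (X n) t
    ltac:(unfold n; lia)) as H0.
  rewrite coef_dact, (dact_dcomm eps), dact_Lax in H0 by exact Hn.
  replace (n + (i - n))%Z with i in H0 by lia.
  unfold lax_jacobi at 2, jacobi at 1 in H0.
  replace (n + 1)%Z with p in H0 by (unfold n; lia).
  rewrite (dact_ext_site X (fun _ => 0) _ _ p) in H0 by exact HXp.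
  rewrite (dact_Bop_plus eps u v (fun _ => 0)) in H0 by apply orbit_at_zero.
  rewrite !dact_Bop_plus in H0 by assumption.
  unfold op_plus in H0.
  rewrite (trunc_ge_id n (lax_jacobi X u v t (delta i))) in H0.
  2:{ intros m Hm. unfold lax_jacobi, jacobi, delta.
      destruct (Z.eqb_spec (m + 1) i), (Z.eqb_spec m i), (Z.eqb_spec (m - 1) i);
        unfold n in *; lia || ring. }
  rewrite !trunc_ge_delta in H0 by (unfold n; lia).
  rewrite Nat.iter_swap in H0. unfold lax_jacobi at 1, jacobi at 1 in H0.
  replace (n + 1)%Z with p in H0 by (unfold n; lia).
  assert (Hfact : / INR (fact j) <> 0) by (apply Rinv_neq_0_compat, INR_fact_neq_0).
  apply (Rmult_eq_reg_l (/ INR (fact j))); [lra | exact Hfact].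
Qed.

Lemma lax_jacobi_singular_orbit eps u v (flow : lax_flow eps u v) X p (HXp : X p = 0)
  (HX : forall n, n <> p -> orbit_at eps X n) t :
  lax_jacobi X u v t = lax_jacobi (fun _ => 0) u v t.
Proof.
  assert (Hcoef : forall m, u (X m) t = u 0 t /\ exp (v (X m) t) = exp (v 0 t)).
  { intro m.
    apply (row_rigid (fun n => u (X n) t) (fun n => exp (v (X n) t)) (u 0 t) (exp (v 0 t)) p).
    - apply Rgt_not_eq, exp_pos.
    - rewrite HXp; reflexivity.
    - rewrite HXp; reflexivity.
    - intros j i Hi. exact (lax_row_singular eps u v flow X p HXp HX t j i Hi). }
  unfold lax_jacobi. f_equal; apply functional_extensionality; intro m; apply Hcoef.
Qed.

Lemma hdens_singular_orbit eps u v (flow : lax_flow eps u v) X p (HXp : X p = 0)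
  (HX : forall n, n <> p -> orbit_at eps X n) k :
  hdens eps u v k (X 0%Z) = hdens eps u v k 0.
Proof.
  apply functional_extensionality; intro s.
  destruct (Z.eq_dec p 0) as [->|Hp]; [rewrite HXp; reflexivity|].
  rewrite (hdens_iter eps u v X) by (apply HX; congruence).
  rewrite (lax_jacobi_singular_orbit eps u v flow X p HXp HX s).
  symmetry. apply (hdens_iter eps u v (fun _ => 0)), orbit_at_zero.
Qed.

Theorem mainTheorem10 (eps : R) (heps : 0 < eps) (u v : R -> (nat -> R) -> R)
  (flow : forall (j : nat), (1 <= j)%nat -> forall (k : Z) (x : R) (t : nat -> R),
     exists d : R,
       derivable_pt_lim (fun s => coef (Lax u v (upd t j s)) k x) (t j) d /\
       eps * d = coef (dcomm eps (dplus (Bop eps u v j t)) (Lax u v t)) k x) :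
  forall (m n : nat), (1 <= m)%nat -> (1 <= n)%nat -> forall (x : R) (t : nat -> R),
    exists d : R,
      derivable_pt_lim (fun s => hdens eps u v m x (upd t n s)) (t n) d /\
      derivable_pt_lim (fun s => hdens eps u v n x (upd t m s)) (t m) d.
Proof.
  intros m n hm hn x t.
  assert (heps0 : eps <> 0) by lra.
  destruct (shift_orbit_through eps x heps0) as [X [<- [HX | [p [HXp HX]]]]].
  - exact (hdens_flow_sym_orbit eps u v X heps0 flow HX m n hm hn t).
  - rewrite !(hdens_singular_orbit eps u v flow X p HXp HX).
    exact (hdens_flow_sym_orbit eps u v (fun _ => 0) heps0 flow (orbit_at_zero eps) m n hm hn t).
Qed.
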